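(* Let $n>1$ be an integer and let $\langle\mathscr{V},\tau,\sim,\Lambda,\mathrm{V},\Rightarrow\rangle$ be a many valued logic with exactly $n$ values (i.e. $|\mathscr{V}|=n$) whose disjunction operation $\mathrm{V}$ is commutative and associative. Suppose that the formula $(\mathfrak{p}\rightarrow\mathfrak{p})\vee\mathfrak{q}$ (for distinct atoms $\mathfrak{p},\mathfrak{q}$) is a tautology of this logic. Then for distinct atoms $\mathfrak{p}_0,\mathfrak{p}_1,\dots,\mathfrak{p}_n$, the formula $$\bigvee_{0\leqslant i<j\leqslant n}(\mathfrak{p}_i\rightarrow\mathfrak{p}_j)$$ (the disjunction of all the $\binom{n+1}{2}$ implications $\mathfrak{p}_i\rightarrow\mathfrak{p}_j$ with $i<j$, in any order and bracketing) is a tautology of this logic.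
   Context: Formulas are built from propositional atoms using $\neg,\wedge,\vee,\rightarrow$ (and the constant $\top$). A many valued logic is a tuple $\langle\mathscr{V},\tau,\sim,\Lambda,\mathrm{V},\Rightarrow\rangle$ where $\mathscr{V}$ is a set of values, $\tau\in\mathscr{V}$ is a designated element (truth), $\sim\colon\mathscr{V}\to\mathscr{V}$ and $\Lambda,\mathrm{V},\Rightarrow\colon\mathscr{V}^2\to\mathscr{V}$. A valuation is any map $\nu$ from atoms to $\mathscr{V}$, extended to formulas by $\nu(\neg\varphi)=\sim\nu(\varphi)$, $\nu(\varphi\wedge\psi)=\nu(\varphi)\,\Lambda\,\nu(\psi)$, $\nu(\varphi\vee\psi)=\nu(\varphi)\,\mathrm{V}\,\nu(\psi)$, $\nu(\varphi\rightarrow\psi)=\nu(\varphi)\Rightarrow\nu(\psi)$. A formula $\theta$ is a tautology if $\nu(\theta)=\tau$ for every valuation $\nu$. An $n$-valued logic is one with $|\mathscr{V}|=n$. *)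

From mathcomp Require Import all_boot all_order.
Set Implicit Arguments. Unset Strict Implicit. Unset Printing Implicit Defensive.

Inductive formula : Type :=
| Atom of nat
| Top
| Neg of formula
| And of formula & formula
| Or of formula & formula
| Imp of formula & formula.

Section Semantics.
Variables (V : Type) (tau : V) (neg : V -> V) (conj disj imp : V -> V -> V).

Fixpoint eval (nu : nat -> V) (f : formula) : V :=
  match f with
  | Atom a => nu a
  | Top => tau
  | Neg g => neg (eval nu g)
  | And g h => conj (eval nu g) (eval nu h)
  | Or g h => disj (eval nu g) (eval nu h)
  | Imp g h => imp (eval nu g) (eval nu h)
  end.

Definition tautology (f : formula) : Prop := forall nu : nat -> V, eval nu f = tau.
End Semantics.

Fixpoint big_or (l : seq formula) : formula :=
  match l with
  | [::] => Top
  | [:: f] => f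
  | f :: r => Or f (big_or r)
  end.

Definition impl_list (n : nat) (a : 'I_n.+1 -> nat) : seq formula :=
  [seq Imp (Atom (a ij.1)) (Atom (a ij.2))
  | ij <- [seq ij : 'I_n.+1 * 'I_n.+1 <- [seq (i, j) | i <- enum 'I_n.+1, j <- enum 'I_n.+1]
           | (ij.1 < ij.2)%N]].

From mathcomp Require Import all_boot.

Set Implicit Arguments. Unset Strict Implicit.

(* Semantically, (p -> p) \/ q being a tautology says that [disj (imp x x) y = tau]
   for all values x, y.  Given a valuation of p_0, ..., p_n in the n values, two
   atoms p_i, p_j with i < j receive the same value (pigeonhole), so the disjunct
   p_i -> p_j evaluates to some [imp x x]; since disjunction is commutative and
   associative, the whole disjunction has the shape [disj (imp x x) y] and is
   therefore tau. *)

Section BigOrEval.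

Variables (V : Type) (tau : V) (neg : V -> V) (conj disj imp : V -> V -> V).
Hypotheses (disjC : commutative disj) (disjA : associative disj).

Local Notation eval := (eval tau neg conj disj imp).

Lemma eval_big_or_mem (nu : nat -> V) (X : eqType) (g : X -> formula)
    (l : seq X) (x : X) :
  x \in l -> (1 < size l)%N ->
  exists y, eval nu (big_or (map g l)) = disj (eval nu (g x)) y.
Proof.
elim: l => [|w [|w' r] IHl] //= x_in _.
rewrite in_cons in x_in; case/orP: x_in => [/eqP ->|x_in]; first by eexists.
case: r IHl x_in => [_|w'' r IHl x_in].
  rewrite mem_seq1 => /eqP ->.
  by exists (eval nu (g w)); rewrite disjC.
have [y ->] := IHl x_in isT.
by exists (disj (eval nu (g w)) y); rewrite disjA (disjC _ (eval nu (g x))) -disjA.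
Qed.

Lemma disj_imp_refl_tau (p q : nat) : p != q ->
    tautology tau neg conj disj imp (Or (Imp (Atom p) (Atom p)) (Atom q)) ->
  forall x y, disj (imp x x) y = tau.
Proof.
move=> neq_pq taut x y; have := taut (fun k => if k == p then x else y).
by rewrite /= eqxx eq_sym (negbTE neq_pq).
Qed.

End BigOrEval.

Lemma ord_collision_lt (T : finType) (m : nat) (f : 'I_m -> T) :
  (#|T| < m)%N -> exists i j : 'I_m, (i < j)%N /\ f i = f j.
Proof.
move=> card_lt; have /injectivePn[i [j neq_ij eq_fij]] : ~~ injectiveb f.
  by apply/injectiveP => /leq_card; rewrite card_ord leqNgt card_lt.
case: (ltngtP i j) => [lt_ij|lt_ji|/val_inj eq_ij]; first by exists i, j.
  by exists j, i.
by rewrite eq_ij eqxx in neq_ij.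
Qed.

Definition ord_lt_pairs (m : nat) : seq ('I_m * 'I_m) :=
  [seq ij : 'I_m * 'I_m <- [seq (i, j) | i <- enum 'I_m, j <- enum 'I_m]
  | (ij.1 < ij.2)%N].

Lemma mem_ord_lt_pairs (m : nat) (i j : 'I_m) :
  ((i, j) \in ord_lt_pairs m) = (i < j)%N.
Proof.
rewrite mem_filter /=; case: ltnP => //= _.
by apply: (allpairs_f pair); rewrite mem_enum.
Qed.

Lemma size_ord_lt_pairs_gt1 (m : nat) : (2 < m)%N -> (1 < size (ord_lt_pairs m))%N.
Proof.
case: m => // m lt2m; have lt1m : (1 < m.+1)%N by apply: ltnW.
pose s : seq ('I_m.+1 * 'I_m.+1) := [:: (ord0, Ordinal lt1m); (ord0, Ordinal lt2m)].
change (size s <= size (ord_lt_pairs m.+1))%N.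
apply: uniq_leq_size => // ij; rewrite !inE.
by case/orP=> /eqP ->; rewrite mem_ord_lt_pairs.
Qed.

Lemma impl_listE (m : nat) (a : 'I_m.+1 -> nat) :
  impl_list a = [seq Imp (Atom (a ij.1)) (Atom (a ij.2)) | ij <- ord_lt_pairs m.+1].
Proof. by []. Qed.

Unset Implicit Arguments.

Theorem lemma1 (n : nat) (hn : 1 < n)
  (V : finType) (hV : #|V| = n)
  (tau : V) (neg : V -> V) (conj disj imp : V -> V -> V)
  (hC : commutative disj) (hA : associative disj)
  (p q : nat) (hpq : p != q)
  (H : tautology tau neg conj disj imp (Or (Imp (Atom p) (Atom p)) (Atom q)))
  (a : 'I_n.+1 -> nat) (ha : injective a) :
  tautology tau neg conj disj imp (big_or (impl_list a)).
Proof.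
move=> nu; rewrite impl_listE.
have [|i [j [lt_ij /= eq_ij]]] := ord_collision_lt (nu \o a); first by rewrite hV.
have ij_in : (i, j) \in ord_lt_pairs n.+1 by rewrite mem_ord_lt_pairs.
have many_pairs := size_ord_lt_pairs_gt1 (hn : 2 < n.+1).
have [y ->] := eval_big_or_mem tau neg conj imp hC hA nu
  (fun ij => Imp (Atom (a ij.1)) (Atom (a ij.2))) ij_in many_pairs.
by rewrite /= eq_ij (disj_imp_refl_tau hpq H).
Qed.
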